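(* Let $\mathcal M_R$ be the set of paravector-valued functions $f=\sum_{j=0}^7f_je_j$ on $\mathbb R^8$ (with partial derivatives) satisfying $\partial_xf=0$, equivalently the Riesz system $\partial_{x_0}f_0-\sum_{i=1}^7\partial_{x_i}f_i=0$, $\partial_{x_0}f_i+\partial_{x_i}f_0=0$ ($1\le i\le7$), $\partial_{x_i}f_j-\partial_{x_j}f_i=0$ ($1\le i\ne j\le 7$). Then \[ \mathcal M_R\subsetneq\{f:\partial_xfI=0\}=\{f:[\partial_xfI]_j=0,\ j=0,1,2\}. \] For instance $f=x_2e_1-x_7e_4$ satisfies $\partial_xf=e_4e_7-e_1e_2\neq0$ but $[\partial_xfI]_j=0$ for $j=0,1,2$.
   Context: $\mathrm{Cl}_{0,7}$ is the real associative Clifford algebra generated by $e_1,\dots,e_7$ with $e_ie_j+e_je_i=-2\delta_{ij}$ and $e_0=1$; $e_{i_1\cdots i_k}=e_{i_1}\cdots e_{i_k}$; $[c]_k$ is the grade-$k$ part of $c$. $\partial_xf=\sum_{i,j=0}^7e_ie_j\,\partial_{x_i}f_j$. $W=e_{123}+e_{145}+e_{176}+e_{246}+e_{257}+e_{347}+e_{365}$ and $I=\frac1{16}(1+We_{1234567})(1-e_{1234567})$. *)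

From Stdlib Require Import Reals Arith ClassicalEpsilon.
Open Scope R_scope.

(* A multivector is a coefficient function on basis blades.  The blade
   e_{i_1...i_k} with 1 <= i_1 < ... < i_k <= 7 is indexed by the bitmask
   with bits (i_1 - 1), ..., (i_k - 1) set; only indices 0..127 are meaningful. *)
Definition MV := nat -> R.

Definition bit (A i : nat) : nat := if Nat.testbit A i then 1%nat else 0%nat.

Definition popcount (A : nat) : nat :=
  (bit A 0 + bit A 1 + bit A 2 + bit A 3 + bit A 4 + bit A 5 + bit A 6)%nat.

(* number of pairs (i in A, j in B) with i > j: transpositions needed to
   reorder e_A e_B *)
Fixpoint inv_count_aux (A B n : nat) : nat :=
  match n with
  | O => O
  | S m => (inv_count_aux A B m +
            (if Nat.testbit A m then
               ((fix cnt (k : nat) : nat :=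
                   match k with O => O | S k' => (cnt k' + bit B k')%nat end) m)
             else O))%nat
  end.

(* e_A e_B = blade_sign A B * e_{A xor B}, using e_i e_j = - e_j e_i (i<>j)
   and e_i^2 = -1 *)
Definition blade_sign (A B : nat) : R :=
  (-1) ^ (inv_count_aux A B 7 + popcount (Nat.land A B)).

Definition mv_mul (a b : MV) : MV :=
  fun k => sum_f_R0 (fun A => blade_sign A (Nat.lxor A k) * a A * b (Nat.lxor A k)) 127.
Definition mv_add (a b : MV) : MV := fun k => a k + b k.
Definition mv_sub (a b : MV) : MV := fun k => a k - b k.
Definition mv_scal (r : R) (a : MV) : MV := fun k => r * a k.

Definition blade (A : nat) : MV := fun k => if Nat.eqb k A then 1 else 0.

Definition e (i : nat) : MV :=
  match i with O => blade 0 | S m => blade (2 ^ m) end.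
Definition mv_one : MV := e 0.

Definition grade (g : nat) (c : MV) : MV :=
  fun k => if Nat.eqb (popcount k) g then c k else 0.

Definition MVzero (c : MV) : Prop := forall k, (k < 128)%nat -> c k = 0.
Definition MVeq (a b : MV) : Prop := forall k, (k < 128)%nat -> a k = b k.

Notation "a ** b" := (mv_mul a b) (at level 40, left associativity).

Definition e1234567 : MV := e 1 ** e 2 ** e 3 ** e 4 ** e 5 ** e 6 ** e 7.

Definition W : MV :=
  mv_add (e 1 ** e 2 ** e 3) (mv_add (e 1 ** e 4 ** e 5) (mv_add (e 1 ** e 7 ** e 6)
  (mv_add (e 2 ** e 4 ** e 6) (mv_add (e 2 ** e 5 ** e 7) (mv_add (e 3 ** e 4 ** e 7)
  (e 3 ** e 6 ** e 5)))))).

Definition I : MV :=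
  mv_scal (1/16) (mv_add mv_one (W ** e1234567) ** mv_sub mv_one e1234567).

Definition Pt : Type := (R * R * R * R * R * R * R * R)%type.

Definition coord (p : Pt) (i : nat) : R :=
  let '(x0, x1, x2, x3, x4, x5, x6, x7) := p in
  match i with
  | 0 => x0 | 1 => x1 | 2 => x2 | 3 => x3 | 4 => x4 | 5 => x5 | 6 => x6
  | 7 => x7 | _ => 0 end.

Definition upd (p : Pt) (i : nat) (t : R) : Pt :=
  let '(x0, x1, x2, x3, x4, x5, x6, x7) := p in
  match i with
  | 0 => (t, x1, x2, x3, x4, x5, x6, x7)
  | 1 => (x0, t, x2, x3, x4, x5, x6, x7)
  | 2 => (x0, x1, t, x3, x4, x5, x6, x7)
  | 3 => (x0, x1, x2, t, x4, x5, x6, x7)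
  | 4 => (x0, x1, x2, x3, t, x5, x6, x7)
  | 5 => (x0, x1, x2, x3, x4, t, x6, x7)
  | 6 => (x0, x1, x2, x3, x4, x5, t, x7)
  | 7 => (x0, x1, x2, x3, x4, x5, x6, t)
  | _ => p end.

(* partial derivative d/dx_i of g at x (the derivative when it exists) *)
Definition partial (g : Pt -> R) (i : nat) (x : Pt) : R :=
  epsilon (inhabits 0)
    (fun l => derivable_pt_lim (fun t => g (upd x i t)) (coord x i) l).

(* a paravector-valued function f = sum_{j=0}^7 f_j e_j, given by its
   components f j (only j = 0..7 are used) *)
Definition ParaFun : Type := nat -> Pt -> R.

Definition HasPartials (f : ParaFun) : Prop :=
  forall (j i : nat) (x : Pt), (j <= 7)%nat -> (i <= 7)%nat ->
    exists l, derivable_pt_lim (fun t => f j (upd x i t)) (coord x i) l.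

Definition dirac (f : ParaFun) (x : Pt) : MV :=
  fun k => sum_f_R0 (fun i => sum_f_R0 (fun j =>
             partial (f j) i x * (e i ** e j) k) 7) 7.

Definition Riesz (f : ParaFun) (x : Pt) : Prop :=
  partial (f 0%nat) 0 x - sum_f_R0 (fun i => partial (f (S i)) (S i) x) 6 = 0
  /\ (forall i, (1 <= i <= 7)%nat -> partial (f i) 0 x + partial (f 0%nat) i x = 0)
  /\ (forall i j, (1 <= i <= 7)%nat -> (1 <= j <= 7)%nat -> i <> j ->
        partial (f j) i x - partial (f i) j x = 0).

Definition InMR (f : ParaFun) : Prop := HasPartials f /\ forall x, MVzero (dirac f x).

Definition ex_f : ParaFun :=
  fun j x => match j with 1 => coord x 2 | 4 => - coord x 7 | _ => 0 end.

From Stdlib Require Import Reals Arith ZArith List Lra Lia Bool ClassicalEpsilon.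
Import ListNotations.
Open Scope R_scope.

(* Write P i j = d_{x_i} f_j.  Every coefficient of the
   multivectors d_x f and (d_x f) I is a linear form in the 64 numbers P i j
   with integer coefficients: e_i e_j is a signed blade, and 16 I has integer
   coefficients. *)

Lemma sum_f_R0_zero (g : nat -> R) (N : nat) :
  (forall n, (n <= N)%nat -> g n = 0) -> sum_f_R0 g N = 0.
Proof.
  induction N as [|N IH]; intros H; simpl; rewrite H by lia; [reflexivity|].
  rewrite IH by (intros; apply H; lia). ring.
Qed.

Lemma sum_f_R0_single (g : nat -> R) (N a : nat) : (a <= N)%nat ->
  (forall n, (n <= N)%nat -> n <> a -> g n = 0) -> sum_f_R0 g N = g a.
Proof.
  induction N as [|N IH]; intros Ha H; simpl.
  - replace a with 0%nat by lia. reflexivity.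
  - destruct (Nat.eq_dec a (S N)) as [->|Hne].
    + rewrite sum_f_R0_zero by (intros; apply H; lia). ring.
    + rewrite IH, (H (S N)) by (try lia; intros; apply H; lia). ring.
Qed.

Lemma sum_mul_r (An : nat -> R) (N : nat) (x : R) :
  sum_f_R0 An N * x = sum_f_R0 (fun i => An i * x) N.
Proof. rewrite Rmult_comm, scal_sum. reflexivity. Qed.

Lemma sum_f_R0_swap (g : nat -> nat -> R) (n m : nat) :
  sum_f_R0 (fun a => sum_f_R0 (fun b => g a b) m) n
  = sum_f_R0 (fun b => sum_f_R0 (fun a => g a b) n) m.
Proof. induction n as [|n IH]; simpl; [reflexivity|]. rewrite IH, <- sum_plus. reflexivity. Qed.

Fixpoint zsum (g : nat -> Z) (N : nat) : Z :=
  match N with O => g O | S n => (zsum g n + g (S n))%Z end.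

Lemma sum_f_R0_IZR (g : nat -> Z) (N : nat) :
  sum_f_R0 (fun n => IZR (g n)) N = IZR (zsum g N).
Proof. induction N as [|N IH]; simpl; [reflexivity|]. rewrite IH, plus_IZR. reflexivity. Qed.

Lemma forallb_seq (p : nat -> bool) (s n : nat) :
  forallb p (seq s n) = true -> forall i, (s <= i < s + n)%nat -> p i = true.
Proof. rewrite forallb_forall. intros H i Hi. apply H, in_seq. lia. Qed.

Lemma nth_map_seq {A : Type} (g : nat -> A) (n i : nat) (d : A) :
  (i < n)%nat -> nth i (map g (seq 0 n)) d = g i.
Proof.
  intros Hi. rewrite nth_indep with (d' := g 0%nat) by (rewrite length_map, length_seq; lia).
  rewrite map_nth, seq_nth by lia. reflexivity.
Qed.

Lemma neg1_pow (n : nat) : (-1) ^ n = IZR (if Nat.even n then 1 else -1).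
Proof.
  induction n as [|n IH]; [reflexivity|].
  rewrite Nat.even_succ, <- Nat.negb_even. simpl pow. rewrite IH.
  destruct (Nat.even n); simpl; lra.
Qed.

Definition zsign (A B : nat) : Z :=
  if Nat.even (inv_count_aux A B 7 + popcount (Nat.land A B)) then 1 else -1.

Lemma blade_sign_IZR (A B : nat) : blade_sign A B = IZR (zsign A B).
Proof. apply neg1_pow. Qed.

Lemma lxor_lt (A k : nat) : (A < 128)%nat -> (k < 128)%nat -> (Nat.lxor A k < 128)%nat.
Proof.
  intros HA Hk.
  assert (H : forallb (fun A => forallb (fun k => Nat.ltb (Nat.lxor A k) 128)
                (seq 0 128)) (seq 0 128) = true) by (vm_compute; reflexivity).
  pose proof (forallb_seq _ 0 128 H A ltac:(lia)) as HA'.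
  apply Nat.ltb_lt, (forallb_seq _ 0 128 HA'). lia.
Qed.

Lemma lxor_cancel (A k : nat) : Nat.lxor A (Nat.lxor A k) = k.
Proof. rewrite <- Nat.lxor_assoc, Nat.lxor_nilpotent, Nat.lxor_0_l. reflexivity. Qed.

Definition table : Type := list Z.
Definition tget (t : table) (k : nat) : Z := nth k t 0%Z.
Definition tabulate (g : nat -> Z) : table := map g (seq 0 128).

Lemma tget_tabulate (g : nat -> Z) (k : nat) : (k < 128)%nat -> tget (tabulate g) k = g k.
Proof. apply nth_map_seq. Qed.

Definition represents (t : table) (a : MV) : Prop :=
  forall k, (k < 128)%nat -> a k = IZR (tget t k).

(* Table product; zero coefficients of the left factor are skipped so that
   products of sparse multivectors compute quickly. *)
Definition tmul (s t : table) : table :=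
  tabulate (fun k => zsum (fun A =>
    if Z.eqb (tget s A) 0 then 0 else zsign A (Nat.lxor A k) * tget s A * tget t (Nat.lxor A k))
    127)%Z.
Definition tadd (s t : table) : table := tabulate (fun k => tget s k + tget t k)%Z.
Definition tsub (s t : table) : table := tabulate (fun k => tget s k - tget t k)%Z.

Definition gen_index (i : nat) : nat := match i with O => O | S m => 2 ^ m end.
Definition tgen (i : nat) : table :=
  tabulate (fun k => if Nat.eqb k (gen_index i) then 1 else 0)%Z.

Lemma represents_mul (s t : table) (a b : MV) :
  represents s a -> represents t b -> represents (tmul s t) (a ** b).
Proof.
  intros Ha Hb k Hk. unfold tmul. rewrite tget_tabulate, <- sum_f_R0_IZR by exact Hk.
  unfold mv_mul. apply sum_eq. intros A HA.
  rewrite blade_sign_IZR, Ha, Hb by (try apply lxor_lt; lia).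
  destruct (Z.eqb_spec (tget s A) 0) as [->|_]; rewrite ?mult_IZR; ring.
Qed.

Lemma represents_add (s t : table) (a b : MV) :
  represents s a -> represents t b -> represents (tadd s t) (mv_add a b).
Proof.
  intros Ha Hb k Hk. unfold tadd, mv_add.
  rewrite tget_tabulate, plus_IZR, Ha, Hb by exact Hk. reflexivity.
Qed.

Lemma represents_sub (s t : table) (a b : MV) :
  represents s a -> represents t b -> represents (tsub s t) (mv_sub a b).
Proof.
  intros Ha Hb k Hk. unfold tsub, mv_sub.
  rewrite tget_tabulate, minus_IZR, Ha, Hb by exact Hk. reflexivity.
Qed.

Lemma e_blade (i : nat) : e i = blade (gen_index i).
Proof. destruct i; reflexivity. Qed.

Lemma represents_gen (i : nat) : represents (tgen i) (e i).
Proof.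
  intros k Hk. unfold tgen. rewrite tget_tabulate, e_blade by exact Hk.
  unfold blade. destruct (Nat.eqb k (gen_index i)); reflexivity.
Qed.

Definition tpseudo : table :=
  tmul (tmul (tmul (tmul (tmul (tmul (tgen 1) (tgen 2)) (tgen 3)) (tgen 4)) (tgen 5))
       (tgen 6)) (tgen 7).

Definition tW : table :=
  tadd (tmul (tmul (tgen 1) (tgen 2)) (tgen 3)) (tadd (tmul (tmul (tgen 1) (tgen 4)) (tgen 5))
  (tadd (tmul (tmul (tgen 1) (tgen 7)) (tgen 6)) (tadd (tmul (tmul (tgen 2) (tgen 4)) (tgen 6))
  (tadd (tmul (tmul (tgen 2) (tgen 5)) (tgen 7)) (tadd (tmul (tmul (tgen 3) (tgen 4)) (tgen 7))
  (tmul (tmul (tgen 3) (tgen 6)) (tgen 5))))))).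

Definition I_table : table := Eval vm_compute in
  tmul (tadd (tgen 0) (tmul tW tpseudo)) (tsub (tgen 0) tpseudo).

Lemma I_table_eq :
  I_table = tmul (tadd (tgen 0) (tmul tW tpseudo)) (tsub (tgen 0) tpseudo).
Proof. vm_compute. reflexivity. Qed.

Lemma represents_16I :
  represents (tmul (tadd (tgen 0) (tmul tW tpseudo)) (tsub (tgen 0) tpseudo))
             (mv_add mv_one (W ** e1234567) ** mv_sub mv_one e1234567).
Proof.
  unfold tW, tpseudo, W, e1234567, mv_one.
  repeat lazymatch goal with
  | |- represents (tmul _ _) _ => apply represents_mul
  | |- represents (tadd _ _) _ => apply represents_add
  | |- represents (tsub _ _) _ => apply represents_sub
  | |- represents (tgen _) _ => apply represents_gen
  end.
Qed.

Lemma I_coef (k : nat) : (k < 128)%nat -> I k = / 16 * IZR (tget I_table k).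
Proof.
  intros Hk. unfold I, mv_scal. rewrite (represents_16I k Hk), <- I_table_eq. lra.
Qed.

Lemma mul_supported_l (a b : MV) (C k : nat) : (C < 128)%nat ->
  (forall A, (A < 128)%nat -> A <> C -> a A = 0) ->
  (a ** b) k = blade_sign C (Nat.lxor C k) * a C * b (Nat.lxor C k).
Proof.
  intros HC Ha. unfold mv_mul.
  apply (sum_f_R0_single (fun A => blade_sign A (Nat.lxor A k) * a A * b (Nat.lxor A k)));
    [lia|].
  intros A HA HAC. rewrite Ha by lia. ring.
Qed.

Lemma gen_index_lt (i : nat) : (i <= 7)%nat -> (gen_index i < 128)%nat.
Proof. intros Hi. destruct i as [|[|[|[|[|[|[|[|i]]]]]]]]; simpl; lia. Qed.

Definition gen_coef (k i j : nat) : Z :=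
  if Nat.eqb k (Nat.lxor (gen_index i) (gen_index j))
  then zsign (gen_index i) (gen_index j) else 0.

Lemma gen_mul_gen (i j k : nat) : (i <= 7)%nat -> (j <= 7)%nat ->
  (e i ** e j) k = IZR (gen_coef k i j).
Proof.
  intros Hi Hj. rewrite !e_blade.
  rewrite (mul_supported_l _ _ (gen_index i)) by
    (try apply gen_index_lt; auto; intros A _ HA; unfold blade; apply Nat.eqb_neq in HA;
     rewrite HA; reflexivity).
  unfold blade, gen_coef. rewrite Nat.eqb_refl.
  destruct (Nat.eqb_spec k (Nat.lxor (gen_index i) (gen_index j))) as [->|Hk].
  - rewrite lxor_cancel, Nat.eqb_refl, blade_sign_IZR. ring.
  - destruct (Nat.eqb_spec (Nat.lxor (gen_index i) k) (gen_index j)) as [E|]; [|ring].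
    exfalso. apply Hk. rewrite <- E, lxor_cancel. reflexivity.
Qed.

Lemma gen_sign_anticomm (i j : nat) : (1 <= i <= 7)%nat -> (1 <= j <= 7)%nat -> i <> j ->
  zsign (gen_index j) (gen_index i) = (- zsign (gen_index i) (gen_index j))%Z.
Proof.
  intros Hi Hj Hij.
  assert (H : forallb (fun i => forallb (fun j => Nat.eqb i j ||
                Z.eqb (zsign (gen_index j) (gen_index i)) (- zsign (gen_index i) (gen_index j)))
                (seq 1 7)) (seq 1 7) = true) by (vm_compute; reflexivity).
  pose proof (forallb_seq _ 1 7 H i ltac:(lia)) as Hrow.
  pose proof (forallb_seq _ 1 7 Hrow j ltac:(lia)) as Hij'.
  apply orb_true_iff in Hij' as [E|E]; [apply Nat.eqb_eq in E; contradiction|].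
  apply Z.eqb_eq. exact E.
Qed.

Lemma gen_coef_anticomm (k i j : nat) : (1 <= i <= 7)%nat -> (1 <= j <= 7)%nat -> i <> j ->
  gen_coef k j i = (- gen_coef k i j)%Z.
Proof.
  intros Hi Hj Hij. unfold gen_coef. rewrite Nat.lxor_comm.
  destruct (Nat.eqb _ _); [apply gen_sign_anticomm|]; auto.
Qed.

Definition gen_I_coef (k i j : nat) : Z :=
  let C := Nat.lxor (gen_index i) (gen_index j) in
  (zsign (gen_index i) (gen_index j) * zsign C (Nat.lxor C k) * tget I_table (Nat.lxor C k))%Z.

Lemma gen_mul_gen_I (i j k : nat) : (i <= 7)%nat -> (j <= 7)%nat -> (k < 128)%nat ->
  (e i ** e j ** I) k = / 16 * IZR (gen_I_coef k i j).
Proof.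
  intros Hi Hj Hk. pose proof (gen_index_lt i Hi). pose proof (gen_index_lt j Hj).
  set (C := Nat.lxor (gen_index i) (gen_index j)).
  assert (HC : (C < 128)%nat) by (apply lxor_lt; assumption).
  rewrite (mul_supported_l _ _ C) by
    (try assumption; intros A _ HA; rewrite gen_mul_gen by assumption; unfold gen_coef;
     apply Nat.eqb_neq in HA; fold C; rewrite HA; reflexivity).
  rewrite gen_mul_gen, I_coef by (try apply lxor_lt; assumption).
  unfold gen_coef, gen_I_coef. fold C. rewrite Nat.eqb_refl, blade_sign_IZR, !mult_IZR. ring.
Qed.

Definition form : Type := nat -> nat -> Z.

Definition Lform (P : nat -> nat -> R) (c : form) : R :=
  sum_f_R0 (fun i => sum_f_R0 (fun j => P i j * IZR (c i j)) 7) 7.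

Definition partials (f : ParaFun) (x : Pt) : nat -> nat -> R := fun i j => partial (f j) i x.

Lemma Lform_ext (P Q : nat -> nat -> R) (c d : form) :
  (forall i j, (i <= 7)%nat -> (j <= 7)%nat -> P i j * IZR (c i j) = Q i j * IZR (d i j)) ->
  Lform P c = Lform Q d.
Proof. intros H. unfold Lform. apply sum_eq. intros i Hi. apply sum_eq. intros j Hj. auto. Qed.

Definition fscale (s : Z) (c : form) : form := fun i j => (s * c i j)%Z.

Lemma Lform_scale (P : nat -> nat -> R) (s : Z) (c : form) :
  Lform P (fscale s c) = IZR s * Lform P c.
Proof.
  unfold Lform. rewrite scal_sum. apply sum_eq. intros i _. rewrite sum_mul_r.
  apply sum_eq. intros j _. unfold fscale. rewrite mult_IZR. ring.
Qed.

Lemma Lform_add (P : nat -> nat -> R) (c d : form) :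
  Lform P (fun i j => c i j + d i j)%Z = Lform P c + Lform P d.
Proof.
  unfold Lform. rewrite <- sum_plus. apply sum_eq. intros i _. rewrite <- sum_plus.
  apply sum_eq. intros j _. rewrite plus_IZR. ring.
Qed.

Lemma Lform_sub (P : nat -> nat -> R) (c d : form) :
  Lform P (fun i j => c i j - d i j)%Z = Lform P c - Lform P d.
Proof.
  unfold Lform. rewrite <- minus_sum. apply sum_eq. intros i _. rewrite <- minus_sum.
  apply sum_eq. intros j _. rewrite minus_IZR. ring.
Qed.

Definition delta (a b : nat) : form :=
  fun i j => if Nat.eqb i a && Nat.eqb j b then 1%Z else 0%Z.

Lemma Lform_delta (P : nat -> nat -> R) (a b : nat) : (a <= 7)%nat -> (b <= 7)%nat ->
  Lform P (delta a b) = P a b.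
Proof.
  intros Ha Hb. unfold Lform, delta.
  rewrite (sum_f_R0_single _ 7 a Ha), (sum_f_R0_single _ 7 b Hb).
  - rewrite !Nat.eqb_refl. simpl. ring.
  - intros j _ Hj. apply Nat.eqb_neq in Hj. rewrite Nat.eqb_refl, Hj. simpl. ring.
  - intros i _ Hi. apply sum_f_R0_zero. intros j _.
    apply Nat.eqb_neq in Hi. rewrite Hi. simpl. ring.
Qed.

Lemma mul_lincomb_l (P : nat -> nat -> R) (u : nat -> nat -> MV) (b : MV) (k : nat) :
  ((fun A => sum_f_R0 (fun i => sum_f_R0 (fun j => P i j * u i j A) 7) 7) ** b) k
  = sum_f_R0 (fun i => sum_f_R0 (fun j => P i j * (u i j ** b) k) 7) 7.
Proof.
  unfold mv_mul.
  transitivity (sum_f_R0 (fun A => sum_f_R0 (fun i => sum_f_R0 (fun j =>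
    P i j * (blade_sign A (Nat.lxor A k) * u i j A * b (Nat.lxor A k))) 7) 7) 127).
  { apply sum_eq. intros A _.
    set (s := blade_sign A (Nat.lxor A k)). set (t := b (Nat.lxor A k)).
    rewrite (Rmult_comm s), Rmult_assoc, sum_mul_r. apply sum_eq. intros i _.
    rewrite sum_mul_r. apply sum_eq. intros j _. ring. }
  rewrite sum_f_R0_swap. apply sum_eq. intros i _.
  rewrite sum_f_R0_swap. apply sum_eq. intros j _.
  rewrite scal_sum. apply sum_eq. intros A _. ring.
Qed.

Lemma dirac_Lform (f : ParaFun) (x : Pt) (k : nat) :
  dirac f x k = Lform (partials f x) (gen_coef k).
Proof.
  unfold dirac, Lform, partials. apply sum_eq. intros i Hi. apply sum_eq. intros j Hj.
  rewrite gen_mul_gen by lia. reflexivity.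
Qed.

Lemma dirac_I_Lform (f : ParaFun) (x : Pt) (k : nat) : (k < 128)%nat ->
  (dirac f x ** I) k = / 16 * Lform (partials f x) (gen_I_coef k).
Proof.
  intros Hk.
  change (dirac f x) with
    (fun A => sum_f_R0 (fun i => sum_f_R0 (fun j => partials f x i j * (e i ** e j) A) 7) 7).
  rewrite mul_lincomb_l. unfold Lform. rewrite scal_sum. apply sum_eq. intros i Hi.
  rewrite sum_mul_r. apply sum_eq. intros j Hj. rewrite gen_mul_gen_I by lia. ring.
Qed.

Definition vanishes_on (P : nat -> nat -> R) (L : list form) : Prop :=
  forall c, In c L -> Lform P c = 0.

Definition form_eqb (c d : form) : bool :=
  forallb (fun i => forallb (fun j => Z.eqb (c i j) (d i j)) (seq 0 8)) (seq 0 8).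

Lemma form_eqb_spec (c d : form) : form_eqb c d = true ->
  forall i j, (i <= 7)%nat -> (j <= 7)%nat -> c i j = d i j.
Proof.
  intros H i j Hi Hj. pose proof (forallb_seq _ 0 8 H i ltac:(lia)) as Hrow.
  apply Z.eqb_eq, (forallb_seq _ 0 8 Hrow). lia.
Qed.

(* The same form with its 64 coefficients precomputed, so that repeated
   comparisons do not re-evaluate them. *)
Definition memo (c : form) : form :=
  let t := map (fun i => map (fun j => c i j) (seq 0 8)) (seq 0 8) in
  fun i j => nth j (nth i t []) 0%Z.

Lemma memo_spec (c : form) (i j : nat) : (i <= 7)%nat -> (j <= 7)%nat -> memo c i j = c i j.
Proof. intros Hi Hj. unfold memo. rewrite !nth_map_seq by lia. reflexivity. Qed.

Definition multiple_in (c : form) (L : list form) : bool :=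
  existsb (fun m => existsb (fun s => form_eqb c (fscale s m)) [0; 1; -1]%Z) L.

Definition multiples_check (L1 L2 : list form) : bool :=
  let M2 := map memo L2 in forallb (fun c => multiple_in (memo c) M2) L1.

Lemma multiples_check_sound (P : nat -> nat -> R) (L1 L2 : list form) :
  multiples_check L1 L2 = true -> vanishes_on P L2 -> vanishes_on P L1.
Proof.
  unfold multiples_check. rewrite forallb_forall. intros Hchk H2 c Hc.
  pose proof (Hchk c Hc) as Hmult. apply existsb_exists in Hmult as [m' [Hm' Hs]].
  apply in_map_iff in Hm' as [m [<- Hm]].
  apply existsb_exists in Hs as [s [_ Hs]].
  rewrite (Lform_ext P P c (fscale s m)), Lform_scale, (H2 m Hm) by
    (intros i j Hi Hj; rewrite <- (memo_spec c), (form_eqb_spec _ _ Hs) by assumption;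
     unfold fscale; rewrite memo_spec by assumption; reflexivity).
  ring.
Qed.

Definition component_forms (N : nat) (F : nat -> form) (sel : nat -> bool) : list form :=
  map F (filter sel (seq 0 N)).

Lemma components_vanish_iff (N : nat) (v : nat -> R) (P : nat -> nat -> R)
    (F : nat -> form) (c : R) (sel : nat -> bool) :
  c <> 0 -> (forall k, (k < N)%nat -> v k = c * Lform P (F k)) ->
  (forall k, (k < N)%nat -> sel k = true -> v k = 0) <->
  vanishes_on P (component_forms N F sel).
Proof.
  intros Hc Hv. unfold vanishes_on, component_forms. split.
  - intros H d Hd. rewrite in_map_iff in Hd. destruct Hd as [k [<- Hk]].
    rewrite filter_In, in_seq in Hk. destruct Hk as [Hk Hs].
    assert (HkN : (k < N)%nat) by lia.
    pose proof (H k HkN Hs) as Hk0. rewrite (Hv k HkN) in Hk0.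
    apply Rmult_integral in Hk0 as [|]; [contradiction|assumption].
  - intros H k Hk Hs. rewrite (Hv k Hk), H; [ring|].
    apply in_map. rewrite filter_In, in_seq. split; [lia | exact Hs].
Qed.

Definition RieszP (P : nat -> nat -> R) : Prop :=
  P 0%nat 0%nat - sum_f_R0 (fun i => P (S i) (S i)) 6 = 0
  /\ (forall i, (1 <= i <= 7)%nat -> P 0%nat i + P i 0%nat = 0)
  /\ (forall i j, (1 <= i <= 7)%nat -> (1 <= j <= 7)%nat -> i <> j -> P i j - P j i = 0).

Definition riesz_scalar : form :=
  fun i j => if Nat.eqb i j then (if Nat.eqb i 0 then 1 else -1)%Z else 0%Z.
Definition riesz_vector (i : nat) : form := fun a b => (delta 0 i a b + delta i 0 a b)%Z.
Definition riesz_bivector (i j : nat) : form := fun a b => (delta i j a b - delta j i a b)%Z.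

Definition riesz_forms : list form :=
  riesz_scalar :: map riesz_vector (seq 1 7)
  ++ flat_map (fun i => map (riesz_bivector i) (seq 1 7)) (seq 1 7).

Lemma riesz_iff_vanishes (P : nat -> nat -> R) : RieszP P <-> vanishes_on P riesz_forms.
Proof.
  assert (Hs : Lform P riesz_scalar = P 0%nat 0%nat - sum_f_R0 (fun i => P (S i) (S i)) 6)
    by (unfold Lform, riesz_scalar; simpl; ring).
  assert (Hv : forall i, (i <= 7)%nat -> Lform P (riesz_vector i) = P 0%nat i + P i 0%nat)
    by (intros; unfold riesz_vector; rewrite Lform_add, !Lform_delta by lia; reflexivity).
  assert (Hb : forall i j, (i <= 7)%nat -> (j <= 7)%nat ->
                 Lform P (riesz_bivector i j) = P i j - P j i)
    by (intros; unfold riesz_bivector; rewrite Lform_sub, !Lform_delta by lia; reflexivity).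
  unfold vanishes_on, riesz_forms. split.
  - intros [H0 [H1 H2]] c Hc. destruct Hc as [<-|Hc]; [rewrite Hs; exact H0|].
    apply in_app_or in Hc as [Hc|Hc].
    + apply in_map_iff in Hc as [i [<- Hi]]. apply in_seq in Hi.
      rewrite Hv by lia. apply H1. lia.
    + apply in_flat_map in Hc as [i [Hi Hc]]. apply in_map_iff in Hc as [j [<- Hj]].
      apply in_seq in Hi, Hj. rewrite Hb by lia.
      destruct (Nat.eq_dec i j) as [<-|Hij]; [ring|]. apply H2; lia.
  - intros H. split; [|split].
    + rewrite <- Hs. apply H. left. reflexivity.
    + intros i Hi. rewrite <- Hv by lia. apply H. right. apply in_or_app. left.
      apply in_map, in_seq. lia.
    + intros i j Hi Hj _. rewrite <- Hb by lia. apply H. right. apply in_or_app. right.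
      apply in_flat_map. exists i. split; [apply in_seq; lia|]. apply in_map, in_seq. lia.
Qed.

Definition dirac_forms : list form := component_forms 128 gen_coef (fun _ => true).

(* Each component of d_x f is, up to sign, a Riesz expression or zero ... *)
Lemma dirac_forms_from_riesz : multiples_check dirac_forms riesz_forms = true.
Proof. vm_compute. reflexivity. Qed.

(* ... and each Riesz expression is, up to sign, a component of d_x f. *)
Lemma riesz_forms_from_dirac : multiples_check riesz_forms dirac_forms = true.
Proof. vm_compute. reflexivity. Qed.

Lemma dirac_zero_iff_riesz (f : ParaFun) (x : Pt) : MVzero (dirac f x) <-> Riesz f x.
Proof.
  change (Riesz f x) with (RieszP (partials f x)). rewrite riesz_iff_vanishes.
  assert (Hc := components_vanish_iff 128 (dirac f x) (partials f x) gen_coef 1 (fun _ => true)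
                  R1_neq_R0 (fun k _ => eq_trans (dirac_Lform f x k) (eq_sym (Rmult_1_l _)))).
  unfold MVzero. split.
  - intros H. apply (multiples_check_sound _ _ _ riesz_forms_from_dirac).
    apply Hc. intros k Hk _. exact (H k Hk).
  - intros H k Hk.
    apply (proj2 Hc (multiples_check_sound _ _ _ dirac_forms_from_riesz H) k Hk eq_refl).
Qed.

Lemma MVzero_mul_l (a b : MV) : MVzero a -> MVzero (a ** b).
Proof.
  intros Ha k Hk. unfold mv_mul. apply sum_f_R0_zero. intros A HA. rewrite Ha by lia. ring.
Qed.

Lemma MVzero_grade (c : MV) (j : nat) : MVzero c -> MVzero (grade j c).
Proof. intros H k Hk. unfold grade. destruct (Nat.eqb _ _); [exact (H k Hk)|reflexivity]. Qed.

Definition low_grade (k : nat) : bool := Nat.leb (popcount k) 2.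

(* Every component of (d_x f) I is, up to sign, one of grade at most 2 or zero. *)
Lemma dirac_I_forms_from_low_grades :
  multiples_check (component_forms 128 gen_I_coef (fun _ => true))
                  (component_forms 128 gen_I_coef low_grade) = true.
Proof. vm_compute. reflexivity. Qed.

Lemma dirac_I_zero_iff_low_grades (f : ParaFun) (x : Pt) :
  MVzero (dirac f x ** I) <-> forall j, (j <= 2)%nat -> MVzero (grade j (dirac f x ** I)).
Proof.
  assert (Hc : forall sel, _ <-> vanishes_on (partials f x) (component_forms 128 gen_I_coef sel))
    by (intro sel; exact (components_vanish_iff 128 (dirac f x ** I) (partials f x) gen_I_coef
                           (/ 16) sel ltac:(lra) (dirac_I_Lform f x))).
  split.
  - intros H j _. apply MVzero_grade, H.
  - intros H k Hk.
    refine (proj2 (Hc (fun _ => true)) _ k Hk eq_refl).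
    apply (multiples_check_sound _ _ _ dirac_I_forms_from_low_grades).
    apply Hc. intros m Hm Hlow. apply Nat.leb_le in Hlow.
    pose proof (H (popcount m) Hlow m Hm) as Hm0. unfold grade in Hm0.
    rewrite Nat.eqb_refl in Hm0. exact Hm0.
Qed.

Lemma affine_derivable (g : R -> R) (b x : R) :
  (forall t, g t = g 0 + b * t) -> derivable_pt_lim g x b.
Proof.
  intros Hg eps Heps. exists (mkposreal 1 Rlt_0_1). intros h Hh _.
  rewrite (Hg (x + h)), (Hg x).
  replace ((g 0 + b * (x + h) - (g 0 + b * x)) / h - b) with 0 by (field; exact Hh).
  rewrite Rabs_R0. exact Heps.
Qed.

Lemma partial_unique (g : Pt -> R) (i : nat) (x : Pt) (l : R) :
  derivable_pt_lim (fun t => g (upd x i t)) (coord x i) l -> partial g i x = l.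
Proof.
  intros H. unfold partial.
  apply (uniqueness_limite (fun t => g (upd x i t)) (coord x i)); [|exact H].
  apply epsilon_spec. exists l. exact H.
Qed.

Definition ex_jacobian : form := fun i j => (delta 2 1 i j - delta 7 4 i j)%Z.

Lemma ex_f_derivable (i j : nat) (x : Pt) : (i <= 7)%nat -> (j <= 7)%nat ->
  derivable_pt_lim (fun t => ex_f j (upd x i t)) (coord x i) (IZR (ex_jacobian i j)).
Proof.
  intros Hi Hj. destruct x as [[[[[[[x0 x1] x2] x3] x4] x5] x6] x7]. apply affine_derivable.
  intro t. destruct i as [|[|[|[|[|[|[|[|i]]]]]]]]; try lia;
    destruct j as [|[|[|[|[|[|[|[|j]]]]]]]]; try lia; cbn -[IZR Rplus Rmult Ropp]; ring.
Qed.

Lemma ex_f_has_partials : HasPartials ex_f.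
Proof. intros j i x Hj Hi. eexists. apply ex_f_derivable; assumption. Qed.

Lemma ex_f_Lform (x : Pt) (c : form) :
  Lform (partials ex_f x) c = IZR (c 2%nat 1%nat) - IZR (c 7%nat 4%nat).
Proof.
  rewrite (Lform_ext _ (fun i j => IZR (c i j)) _ ex_jacobian).
  - unfold ex_jacobian. rewrite Lform_sub, !Lform_delta by lia. reflexivity.
  - intros i j Hi Hj. unfold partials.
    rewrite (partial_unique _ _ _ _ (ex_f_derivable i j x Hi Hj)). ring.
Qed.

(* d_x f = e_2 e_1 - e_7 e_4 = e_4 e_7 - e_1 e_2. *)
Lemma ex_f_dirac (x : Pt) : MVeq (dirac ex_f x) (mv_sub (e 4 ** e 7) (e 1 ** e 2)).
Proof.
  intros k Hk. rewrite dirac_Lform, ex_f_Lform. unfold mv_sub.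
  rewrite !gen_mul_gen, (gen_coef_anticomm k 1 2), (gen_coef_anticomm k 4 7), !opp_IZR by lia.
  ring.
Qed.

(* Its coefficient on the blade e_{47} (bitmask 72) is 1. *)
Lemma ex_f_dirac_nonzero : ~ MVzero (mv_sub (e 4 ** e 7) (e 1 ** e 2)).
Proof.
  intros H. specialize (H 72%nat ltac:(lia)). unfold mv_sub in H.
  rewrite !gen_mul_gen in H by lia.
  replace (gen_coef 72 4 7) with 1%Z in H by (vm_compute; reflexivity).
  replace (gen_coef 72 1 2) with 0%Z in H by (vm_compute; reflexivity).
  lra.
Qed.

(* e_2 e_1 I = e_7 e_4 I, hence (d_x f) I = 0. *)
Lemma ex_f_dirac_I (x : Pt) : MVzero (dirac ex_f x ** I).
Proof.
  intros k Hk. rewrite dirac_I_Lform, ex_f_Lform by exact Hk.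
  assert (H : forallb (fun k => Z.eqb (gen_I_coef k 2 1) (gen_I_coef k 7 4)) (seq 0 128) = true)
    by (vm_compute; reflexivity).
  pose proof (forallb_seq _ 0 128 H k ltac:(lia)) as Hk'. apply Z.eqb_eq in Hk'.
  rewrite Hk'. ring.
Qed.

Theorem mainTheorem17 :
  (forall f : ParaFun, HasPartials f ->
     ((forall x, MVzero (dirac f x)) <-> (forall x, Riesz f x)))
  /\ (forall f : ParaFun, InMR f -> forall x, MVzero (dirac f x ** I))
  /\ (exists f : ParaFun, HasPartials f /\ (forall x, MVzero (dirac f x ** I))
                          /\ ~ InMR f)
  /\ (forall f : ParaFun, HasPartials f ->
       ((forall x, MVzero (dirac f x ** I)) <->
        (forall x (j : nat), (j <= 2)%nat -> MVzero (grade j (dirac f x ** I)))))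
  /\ (HasPartials ex_f
      /\ (forall x, MVeq (dirac ex_f x) (mv_sub (e 4 ** e 7) (e 1 ** e 2)))
      /\ ~ MVzero (mv_sub (e 4 ** e 7) (e 1 ** e 2))
      /\ (forall x (j : nat), (j <= 2)%nat -> MVzero (grade j (dirac ex_f x ** I)))).
Proof.
  split; [|split; [|split; [|split]]].
  - intros f _. split; intros H x; apply dirac_zero_iff_riesz, H.
  - intros f [_ H] x. apply MVzero_mul_l, H.
  - exists ex_f. split; [exact ex_f_has_partials|split; [exact ex_f_dirac_I|]].
    intros [_ H]. apply ex_f_dirac_nonzero. intros k Hk.
    rewrite <- (ex_f_dirac (0, 0, 0, 0, 0, 0, 0, 0) k Hk). exact (H _ k Hk).
  - intros f _. split; intros H x; apply dirac_I_zero_iff_low_grades, H.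
  - split; [exact ex_f_has_partials|split; [exact ex_f_dirac|split; [exact ex_f_dirac_nonzero|]]].
    intros x j _. apply MVzero_grade, ex_f_dirac_I.
Qed.
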